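(* Let $d_{\sf A},d_{\sf B}\geq2$ be integers, $d=d_{\sf A}d_{\sf B}$, and embed $\mathrm{SU}(d_{\sf A})\times\mathrm{SU}(d_{\sf B})$ in $\mathrm{SU}(d)$ via $(U_{\sf A},U_{\sf B})\mapsto U_{\sf A}\otimes U_{\sf B}$. For a non-negative integer $j$ let $\mathcal D^d_j$ be the irreducible representation of $\mathrm{SU}(d)$ labelled by the Young diagram $(2j,j^{d-2})$. If the restrictions of $\mathcal D^d_j$ and of $\mathcal D^d_2$ to $\mathrm{SU}(d_{\sf A})\times\mathrm{SU}(d_{\sf B})$ each contain the representation $1^{d_{\sf A}}\boxtimes1^{d_{\sf B}}$, then so does the restriction of $\mathcal D^d_{j+2}$.
   Context: The Young diagram $(2j,j^{d-2})$ has a first row of $2j$ boxes followed by $d-2$ rows of $j$ boxes each. Irreducible representations of $\mathrm{SU}(k)$ are labelled by Young diagrams with at most $k$ rows. $1^k$ denotes the trivial representation of $\mathrm{SU}(k)$ and $\boxtimes$ the outer tensor product representation of the product group. *)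

From HB Require Import structures.
From mathcomp Require Import all_boot all_order all_algebra all_fingroup.
From mathcomp Require Import reals.
From mathcomp Require Import complex mxtens.
Set Implicit Arguments. Unset Strict Implicit. Unset Printing Implicit Defensive.
Import Order.TTheory GRing.Theory Num.Theory.
Local Open Scope ring_scope.

(* Tensors in (K^d)^{(x) n}: functions from multi-indices 'I_n -> 'I_d to K. *)
Definition midx (n d : nat) := {ffun 'I_n -> 'I_d}.

Definition tens_act {K : comNzRingType} {n d : nat} (M : 'M[K]_d)
  (v : midx n d -> K) : midx n d -> K :=
  fun i => \sum_(j : midx n d) (\prod_(k < n) M (i k) (j k)) * v j.

Definition perm_act {K : Type} {n d : nat} (s : 'S_n) (v : midx n d -> K)
  : midx n d -> K :=
  fun i => v [ffun k => i (s k)].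

(* Young diagrams given by their row lengths lam (a seq nat), filled with    *)
(* 0 .. |lam|-1 row by row (the standard row-reading tableau).               *)
Definition rowof (lam : seq nat) (k : nat) : nat :=
  find (fun r => k < sumn (take r.+1 lam))%N (iota 0 (size lam)).
Definition colof (lam : seq nat) (k : nat) : nat :=
  (k - sumn (take (rowof lam k) lam))%N.

Definition row_group (lam : seq nat) : {set 'S_(sumn lam)} :=
  [set s : 'S_(sumn lam) | [forall k, rowof lam (s k) == rowof lam k]].
Definition col_group (lam : seq nat) : {set 'S_(sumn lam)} :=
  [set s : 'S_(sumn lam) | [forall k, colof lam (s k) == colof lam k]].

Definition young_sym {K : comNzRingType} (lam : seq nat) {d : nat}
  (v : midx (sumn lam) d -> K) : midx (sumn lam) d -> K :=
  fun i => \sum_(p in row_group lam) \sum_(q in col_group lam)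
             (-1) ^+ (odd_perm q) * perm_act p (perm_act q v) i.

(* Weyl's construction: the irreducible SU(d)-module with Young diagram lam  *)
(* (at most d rows) is the image  S_lam = c_lam . (C^d)^{(x) |lam|}  with     *)
(* U acting as U^{(x) |lam|}.                                                *)

Definition SU {R : realType} (n : nat) : {pred 'M[R[i]]_n} :=
  [pred U : 'M[R[i]]_n | (U *m (map_mx Num.conj U)^T == 1%:M) && (\det U == 1)].

Definition diagD (d j : nat) : seq nat := (2 * j)%N :: nseq (d - 2) j.

(* The restriction of the SU(dA*dB)-irrep with diagram lam to               *)
(*  SU(dA) x SU(dB) (embedded via (UA,UB) |-> UA (x) UB) contains the trivial *)
(*  representation 1^{dA} [x] 1^{dB}:  S_lam contains a nonzero vector fixed *)
(*  by every (UA (x) UB)^{(x) |lam|}.                                        *)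
Definition restr_contains_trivial (R : realType) (dA dB : nat) (lam : seq nat)
  : Prop :=
  exists v : midx (sumn lam) (dA * dB) -> R[i],
    (exists i, @young_sym _ lam _ v i != 0) /\
    forall (UA : 'M[R[i]]_dA) (UB : 'M[R[i]]_dB),
      UA \in @SU R dA -> UB \in @SU R dB ->
      forall i, tens_act (UA *t UB) (@young_sym _ lam _ v) i = @young_sym _ lam _ v i.

(* The Young symmetrizer is [c = A B], where [B] antisymmetrizes the columns and
   [A] symmetrizes the rows; both are self-adjoint for the standard Hermitian
   product.  Hence [S_lam] contains a nonzero invariant vector iff there is an
   invariant tensor [s], antisymmetric in each column, with [A s != 0] (then
   [c s = |C| A s]).  The diagram [(2j+4, (j+2)^(d-2))] is obtained by inserting,
   row by row, the columns of [(4, 2^(d-2))] among those of [(2j, j^(d-2))], so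
   the tensor product [s1 (x) s2] of two such witnesses is again invariant and
   column-antisymmetric.  Finally [A (s1 (x) s2) != 0]: writing row-symmetric
   tensors as polynomials in variables [X_(row, letter)] is injective and turns
   tensor products into products, and a polynomial ring over a field is a domain. *)

From mathcomp Require Import all_boot all_order all_algebra all_fingroup.
From mathcomp Require Import reals complex mxtens mpoly zify.
Set Implicit Arguments. Unset Strict Implicit. Unset Printing Implicit Defensive.
Import Order.TTheory GRing.Theory Num.Theory.

Lemma find_eq_first (s : seq nat) (a : pred nat) r : r < size s -> a (nth 0 s r) ->
  (forall r', r' < r -> ~~ a (nth 0 s r')) -> find a s = r.
Proof.
move=> r_s a_r before_r; case: (ltngtP (find a s) r) => // r_find.
  have has_a : has a s by rewrite has_find (ltn_trans r_find).
  by move: (nth_find 0 has_a); rewrite (negbTE (before_r _ r_find)).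
by move: (before_find 0 r_find); rewrite a_r.
Qed.

Section Diagram.
Variable lam : seq nat.

Definition row_start r := sumn (take r lam).

Lemma row_startS r : r < size lam -> row_start r.+1 = row_start r + nth 0 lam r.
Proof. by move=> r_lam; rewrite /row_start (take_nth 0 r_lam) sumn_rcons. Qed.

Lemma row_start_mono : {homo row_start : r r' / r <= r'}.
Proof.
move=> r r' /subnKC <-; elim: (r' - r) => [|m IHm]; first by rewrite addn0.
apply: leq_trans IHm _; rewrite addnS.
case: (ltnP (r + m) (size lam)) => r_lam; first by rewrite row_startS ?leq_addr.
by rewrite /row_start !take_oversize // (leq_trans r_lam).
Qed.

Lemma row_start_size : row_start (size lam) = sumn lam.
Proof. by rewrite /row_start take_size. Qed.

Lemma rowof_box r c : r < size lam -> c < nth 0 lam r -> rowof lam (row_start r + c) = r.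
Proof.
move=> r_lam c_r; rewrite /rowof; apply: find_eq_first; rewrite ?size_iota ?nth_iota //.
  by rewrite add0n -/(row_start r.+1) row_startS // ltn_add2l.
move=> r' r'_r; rewrite nth_iota ?add0n ?(ltn_trans r'_r) // -/(row_start r'.+1).
by rewrite -leqNgt (leq_trans (row_start_mono r'_r)) ?leq_addr.
Qed.

Lemma colof_box r c : r < size lam -> c < nth 0 lam r -> colof lam (row_start r + c) = c.
Proof. by move=> r_lam c_r; rewrite /colof rowof_box // addKn. Qed.

Lemma rowof_le k : rowof lam k <= size lam.
Proof. by rewrite /rowof -{2}(size_iota 0 (size lam)) find_size. Qed.

Lemma box_decomp k : k < sumn lam ->
  [/\ rowof lam k < size lam, colof lam k < nth 0 lam (rowof lam k) &
      k = row_start (rowof lam k) + colof lam k].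
Proof.
move=> k_lam; set P := fun r => k < sumn (take r.+1 lam).
have has_P : has P (iota 0 (size lam)).
  case E: (size lam) => [|m]; first by move: E k_lam => /size0nil ->.
  apply/hasP; exists m; first by rewrite mem_iota add0n ltnSn.
  by rewrite /P -E take_size.
have row_lt : rowof lam k < size lam by move: has_P; rewrite has_find size_iota.
have k_next : k < row_start (rowof lam k) + nth 0 lam (rowof lam k).
  have := nth_find 0 has_P; rewrite nth_iota // add0n -/(rowof lam k) /P.
  by rewrite -/(row_start (rowof lam k).+1) row_startS.
have start_k : row_start (rowof lam k) <= k.
  case E: (rowof lam k) => [|r]; first by rewrite /row_start take0.
  have r_find : r < find P (iota 0 (size lam)) by rewrite -/(rowof lam k) E.
  have := before_find 0 r_find; rewrite nth_iota; last by apply: ltnW; rewrite -E.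
  by rewrite add0n /P -/(row_start r.+1) => /negbT; rewrite -leqNgt.
by split; rewrite /colof -/(row_start _) ?ltn_subLR ?subnKC.
Qed.

End Diagram.

Section BoxEmbedding.
Variables (lam lamT : seq nat) (F : nat -> nat).
Hypothesis size_lamT : size lam = size lamT.
Hypothesis F_box : forall r c, r < size lam -> c < nth 0 lam r -> F c < nth 0 lamT r.

Lemma box_emb_subproof (k : 'I_(sumn lam)) :
  row_start lamT (rowof lam k) + F (colof lam k) < sumn lamT.
Proof.
have [r_lam c_r _] := box_decomp (ltn_ord k).
have r_lamT : rowof lam k < size lamT by rewrite -size_lamT.
rewrite -(row_start_size lamT); apply: leq_trans (row_start_mono lamT r_lamT).
by rewrite row_startS // ltn_add2l F_box.
Qed.

Definition box_emb (k : 'I_(sumn lam)) : 'I_(sumn lamT) := Ordinal (box_emb_subproof k).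

Lemma box_emb_row k : rowof lamT (box_emb k) = rowof lam k.
Proof.
by have [r_lam c_r _] := box_decomp (ltn_ord k); rewrite rowof_box -?size_lamT ?F_box.
Qed.

Lemma box_emb_col k : colof lamT (box_emb k) = F (colof lam k).
Proof.
by have [r_lam c_r _] := box_decomp (ltn_ord k); rewrite colof_box -?size_lamT ?F_box.
Qed.

Lemma box_emb_inj : injective F -> injective box_emb.
Proof.
move=> F_inj k k' emb_kk'; apply: ord_inj.
have [_ _ ->] := box_decomp (ltn_ord k); have [_ _ ->] := box_decomp (ltn_ord k').
rewrite -box_emb_row emb_kk' box_emb_row; congr (_ + _).
by apply: F_inj; rewrite -!box_emb_col emb_kk'.
Qed.

End BoxEmbedding.

Section IndexPermutation.
Variables n d : nat.
Implicit Types (i : midx n d) (p q : 'S_n).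

Definition midx_perm i p : midx n d := [ffun k => i (p k)].

Lemma midx_permM i p q : midx_perm (midx_perm i p) q = midx_perm i (q * p)%g.
Proof. by apply/ffunP => k; rewrite !ffunE permM. Qed.

Lemma midx_perm1 i : midx_perm i 1 = i.
Proof. by apply/ffunP => k; rewrite !ffunE perm1. Qed.

Lemma midx_permK p : cancel (midx_perm^~ p) (midx_perm^~ p^-1%g).
Proof. by move=> i; rewrite midx_permM mulVg midx_perm1. Qed.

Lemma midx_permKV p : cancel (midx_perm^~ p^-1%g) (midx_perm^~ p).
Proof. by move=> i; rewrite midx_permM mulgV midx_perm1. Qed.

Lemma midx_perm_bij p : bijective (midx_perm^~ p).
Proof. exact: Bijective (midx_permK p) (midx_permKV p). Qed.

End IndexPermutation.

Section Symmetrizer.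
Local Open Scope ring_scope.
Variables (K : numClosedFieldType) (n d : nat).
Implicit Types (b : bool) (i : midx n d) (p q : 'S_n) (x y : midx n d -> K).

Definition sgnb b p : K := (-1) ^+ (b && odd_perm p).

Lemma sgnbM b p q : sgnb b (p * q)%g = sgnb b p * sgnb b q.
Proof. by rewrite /sgnb odd_permM; case: b; rewrite ?mul1r ?signr_addb. Qed.

Lemma sgnbV b p : sgnb b p^-1%g = sgnb b p.
Proof. by rewrite /sgnb odd_permV. Qed.

Lemma sgnb_sqr b p : sgnb b p * sgnb b p = 1.
Proof. by rewrite -expr2 sqrr_sign. Qed.

Lemma sgnb_conj b p : (sgnb b p)^* = sgnb b p.
Proof. exact: rmorph_sign. Qed.

Definition symmetrize (G : {set 'S_n}) b x : midx n d -> K :=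
  fun i => \sum_(p in G) sgnb b p * x (midx_perm i p).

Definition dotf x y : K := \sum_i x i * (y i)^*.

Lemma symmetrize_ext G b x y : x =1 y -> symmetrize G b x =1 symmetrize G b y.
Proof. by move=> xy i; apply: eq_bigr => p _; rewrite xy. Qed.

Lemma dotf_ext x x' y y' : x =1 x' -> y =1 y' -> dotf x y = dotf x' y'.
Proof. by move=> xx yy; apply: eq_bigr => i _; rewrite xx yy. Qed.

Lemma dotfZr c x y : dotf x (fun i => c * y i) = c^* * dotf x y.
Proof.
by rewrite /dotf mulr_sumr; apply: eq_bigr => i _; rewrite rmorphM mulrCA.
Qed.

Lemma dotf0l x y : x =1 (fun=> 0) -> dotf x y = 0.
Proof. by move=> x0; apply: big1 => i _; rewrite x0 mul0r. Qed.

Lemma dotf0r x y : y =1 (fun=> 0) -> dotf x y = 0.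
Proof. by move=> y0; apply: big1 => i _; rewrite y0 rmorph0 mulr0. Qed.

Lemma dotf_eq0 x : dotf x x = 0 -> x =1 (fun=> 0).
Proof.
move=> xx0 i; apply/eqP; rewrite -normr_eq0 -sqrf_eq0 normCK.
by apply/eqP; apply: (psumr_eq0P _ xx0) => // k _; rewrite -normCK exprn_ge0.
Qed.

Lemma tens_act_ext (M : 'M[K]_d) x y : x =1 y -> tens_act M x =1 tens_act M y.
Proof. by move=> xy i; apply: eq_bigr => j _; rewrite xy. Qed.

Lemma tens_act_symmetrize G b (M : 'M[K]_d) x :
  tens_act M (symmetrize G b x) =1 symmetrize G b (tens_act M x).
Proof.
move=> i; rewrite /tens_act /symmetrize.
under eq_bigr do rewrite mulr_sumr.
rewrite exchange_big /=; apply: eq_bigr => p _; rewrite mulr_sumr.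
rewrite (reindex _ (onW_bij _ (@midx_perm_bij n d p^-1%g))) /=.
apply: eq_bigr => j _; rewrite midx_permKV mulrCA; congr (_ * (_ * _)).
rewrite (reindex_inj (@perm_inj _ p)) /=.
by apply: eq_bigr => k _; rewrite !ffunE permK.
Qed.

Section Group.
Variables (G : {group 'S_n}) (b : bool).
Local Notation S := (symmetrize G b).

Lemma sum_group_mulr p (F : 'S_n -> K) : p \in G ->
  \sum_(q in G) F q = \sum_(q in G) F (q * p)%g.
Proof.
by move=> pG; rewrite (reindex_inj (mulIg p)); apply: eq_bigl => q; rewrite groupMr.
Qed.

Lemma symmetrize_perm x i p : p \in G -> S x (midx_perm i p) = sgnb b p * S x i.
Proof.
move=> pG; rewrite /symmetrize (sum_group_mulr _ (groupVr pG)) mulr_sumr.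
apply: eq_bigr => q _; rewrite midx_permM -mulgA mulVg mulg1 sgnbM sgnbV.
by rewrite -mulrA mulrCA.
Qed.

Lemma symmetrize_idem x : S (S x) =1 (fun i => #|G|%:R * S x i).
Proof.
move=> i; rewrite {1}/symmetrize (eq_bigr (fun _ => S x i)) ?sumr_const ?mulr_natl //.
by move=> p pG; rewrite symmetrize_perm // mulrA sgnb_sqr mul1r.
Qed.

Lemma symmetrize_adj x y : dotf (S x) y = dotf x (S y).
Proof.
rewrite /dotf /symmetrize; under eq_bigr do rewrite mulr_suml.
under [RHS]eq_bigr do rewrite raddf_sum mulr_sumr.
rewrite exchange_big [RHS]exchange_big /= (reindex_inj invg_inj) /=.
rewrite (eq_bigl (mem G)) => [|p]; last by rewrite /= groupV.
apply: eq_bigr => p _.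
rewrite (reindex _ (onW_bij _ (@midx_perm_bij n d p))) /=.
apply: eq_bigr => i _; rewrite midx_permK rmorphM /= sgnb_conj sgnbV.
by rewrite mulrCA mulrA.
Qed.

(* [<S x, S x> = <S (S x), x> = |G| <S x, x>] *)
Lemma symmetrize_dot_eq0 x : dotf (S x) x = 0 -> S x =1 (fun=> 0).
Proof.
move=> Sxx; apply: dotf_eq0.
rewrite symmetrize_adj (dotf_ext (x' := x) (y' := fun i => #|G|%:R * S x i)) //.
  by rewrite dotfZr -symmetrize_adj Sxx mulr0.
exact: symmetrize_idem.
Qed.

End Group.
End Symmetrizer.

Section YoungIdempotent.
Local Open Scope ring_scope.
Variables (K : numClosedFieldType) (n d : nat) (GR GC : {group 'S_n}).
Local Notation A := (@symmetrize K n d GR false).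
Local Notation B := (@symmetrize K n d GC true).

(* With [t := A (B v)], [<t, t> = |GR| <v, B t>] forces [B t != 0], and then
   [<A (B t), t> = |GR| <B t, t>] forces [A (B t) != 0]. *)
Lemma symmetrize_antisym_twice_neq0 (v : midx n d -> K) i0 : A (B v) i0 != 0 ->
  exists i, A (B (A (B v))) i != 0.
Proof.
move=> ABv_nz; set t := A (B v).
have GR_nz : (#|GR|%:R : K) != 0 by rewrite pnatr_eq0 -lt0n cardG_gt0.
have At : A t =1 (fun i => #|GR|%:R * t i) by apply: symmetrize_idem.
have Bt_nz : ~ B t =1 (fun=> 0).
  move=> Bt0; suff t0 : t =1 (fun=> 0) by rewrite -/(t i0) t0 eqxx in ABv_nz.
  apply: dotf_eq0; rewrite {1}/t symmetrize_adj (dotf_ext (fun=> erefl) At) dotfZr.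
  by rewrite symmetrize_adj (dotf_ext (fun=> erefl) Bt0) dotf0r ?mulr0.
have [i ABt_i | ABt0] := pickP (fun i => A (B t) i != 0); first by exists i.
case: Bt_nz; apply: symmetrize_dot_eq0; apply/eqP.
have : #|GR|%:R * dotf (B t) t = 0.
  rewrite -conjC_nat -dotfZr -(dotf_ext (fun=> erefl) At) -symmetrize_adj.
  by rewrite dotf0l // => i; apply/eqP/negbFE/ABt0.
by move/eqP; rewrite mulf_eq0 (negbTE GR_nz).
Qed.

End YoungIdempotent.

Section LabelGroup.
Variables (n : nat) (lab : nat -> nat).

Definition label_group : {set 'S_n} := [set s : 'S_n | [forall k, lab (s k) == lab k]].

Lemma label_groupP (s : 'S_n) :
  reflect (forall k, lab (s k) = lab k) (s \in label_group).
Proof. by rewrite inE; apply: (iffP forallP) => h k; apply/eqP. Qed.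

Lemma label_group_set : group_set label_group.
Proof.
apply/andP; split; first by apply/label_groupP => k; rewrite perm1.
apply/subsetP => _ /imset2P [s t /label_groupP hs /label_groupP ht ->].
by apply/label_groupP => k; rewrite permM ht hs.
Qed.

Canonical label_group_group := Group label_group_set.

Lemma tperm_label_group (a b : 'I_n) : lab a = lab b -> tperm a b \in label_group.
Proof. by move=> ab; apply/label_groupP => k; case: tpermP => [->|->|]. Qed.

End LabelGroup.

Canonical row_group_group lam : {group 'S_(sumn lam)} :=
  @Group _ (row_group lam) (label_group_set (sumn lam) (rowof lam)).
Canonical col_group_group lam : {group 'S_(sumn lam)} :=
  @Group _ (col_group lam) (label_group_set (sumn lam) (colof lam)).

Lemma young_symE (K : numClosedFieldType) lam d (v : midx (sumn lam) d -> K) :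
  young_sym v =1 symmetrize (row_group lam) false (symmetrize (col_group lam) true v).
Proof. by move=> i; apply: eq_bigr => p _; rewrite mul1r. Qed.

Lemma label_perm_prod_tperm (T : finType) (lab : T -> nat) (s : {perm T}) :
  (forall x, lab (s x) = lab x) ->
  exists2 ts : seq (T * T), s = (\prod_(t <- ts) tperm t.1 t.2)%g &
    all (fun t => (t.1 != t.2) && (lab t.1 == lab t.2)) ts.
Proof.
have [m] := ubnP #|[pred x | s x != x]|.
elim: m s => // m IHm s /ltnSE-le_s_m lab_s.
case: (pickP (fun x => s x != x)) => [x s_x | s_id]; last first.
  exists [::] => //; rewrite big_nil; apply/permP => x.
  by apply/eqP/idPn; rewrite perm1 s_id.
pose s' := (tperm x (s^-1 x) * s)%g.
have lab_sV : lab (s^-1%g x) = lab x by rewrite -{2}(permKV s x) lab_s.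
have lab_s' y : lab (s' y) = lab y.
  by rewrite permM lab_s; case: tpermP => [->|->|].
have le_s'_m : (#|[pred y | s' y != y]| < m)%N.
  rewrite (cardD1 x) !inE s_x in le_s_m; apply: leq_ltn_trans le_s_m.
  apply: subset_leq_card; apply/subsetP => y.
  rewrite !inE permM permE /= -(canF_eq (permK _)).
  have [-> | ne_yx] := eqVneq y x; first by rewrite permKV eqxx.
  by case: (s y =P x) => // -> _; rewrite eq_sym.
have [ts def_s' ts_ok] := IHm _ le_s'_m lab_s'.
exists ((x, s^-1%g x) :: ts); last by rewrite /= -(canF_eq (permK _)) s_x lab_sV eqxx.
by rewrite big_cons -def_s' mulgA tperm2 mul1g.
Qed.

Section Antisymmetric.
Local Open Scope ring_scope.
Variables (K : numClosedFieldType) (n d : nat) (lab : nat -> nat).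
Variable y : midx n d -> K.
Hypothesis y_tperm : forall a b : 'I_n, a != b -> lab a = lab b ->
  forall i, y (midx_perm i (tperm a b)) = - y i.

Lemma label_group_antisym q i : q \in label_group n lab ->
  y (midx_perm i q) = sgnb K true q * y i.
Proof.
move=> /label_groupP /label_perm_prod_tperm [ts -> ts_ok].
rewrite /sgnb /= odd_perm_prod; last by apply/allP => t /(allP ts_ok) /andP [].
rewrite signr_odd; elim: ts ts_ok i => [|t ts IHts] /=.
  by move=> _ i; rewrite big_nil midx_perm1 mul1r.
move=> /andP [/andP [t12 /eqP lab_t] ts_ok] i.
by rewrite big_cons -midx_permM y_tperm // IHts // exprS mulN1r mulNr.
Qed.

Lemma symmetrize_label_antisym :
  symmetrize (label_group n lab) true y =1 (fun i => #|label_group n lab|%:R * y i).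
Proof.
move=> i; rewrite /symmetrize (eq_bigr (fun _ => y i)) ?sumr_const ?mulr_natl //.
by move=> q qG; rewrite label_group_antisym // mulrA sgnb_sqr mul1r.
Qed.

End Antisymmetric.

(* [label_poly lab x] encodes [x] as a polynomial in commuting variables
   [X_(r, a)], one per label [r <= Mb] and letter [a < d]: the basis tensor [i]
   becomes the monomial [prod_k X_(lab k, i k)].  The encoding is injective on
   tensors symmetric under [label_group], and turns [tensor_join] into a product. *)
Section LabelPolynomial.
Local Open Scope ring_scope.
Variables (K : numClosedFieldType) (d Mb : nat).

Definition nvars := #|{: 'I_Mb.+1 * 'I_d}|.

Definition label_var (r : nat) (a : 'I_d) : 'I_nvars := enum_rank (inord r, a).

Definition label_mono n (lab : nat -> nat) (i : midx n d) : 'X_{1..nvars} :=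
  \big[mnm_add/mnm0]_(k < n) mnm1 (label_var (lab k) (i k)).

Definition label_poly n lab (x : midx n d -> K) : {mpoly K[nvars]} :=
  \sum_i x i *: 'X_[label_mono lab i].

Variables (n : nat) (lab : nat -> nat).
Hypothesis lab_le : forall k, (lab k <= Mb)%N.
Implicit Types (x y : midx n d -> K) (i : midx n d).

Lemma label_mono_perm i p : p \in label_group n lab ->
  label_mono lab (midx_perm i p) = label_mono lab i.
Proof.
move/label_groupP => lab_p; rewrite /label_mono [RHS](reindex_inj (@perm_inj _ p)).
by apply: eq_bigr => k _; rewrite ffunE lab_p.
Qed.

Lemma label_poly_symmetrize x : label_poly lab (symmetrize (label_group n lab) false x)
  = #|label_group n lab|%:R *: label_poly lab x.
Proof.
rewrite /label_poly /symmetrize; under eq_bigr do rewrite scaler_suml.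
rewrite exchange_big /= scaler_nat -sumr_const; apply: eq_bigr => p pG.
rewrite (reindex _ (onW_bij _ (@midx_perm_bij n d p^-1%g))) /=.
by apply: eq_bigr => i _; rewrite midx_permKV mul1r label_mono_perm // groupV.
Qed.

Lemma label_mono_count i v :
  label_mono lab i v = #|[pred k : 'I_n | label_var (lab k) (i k) == v]|.
Proof.
rewrite /label_mono mnm_sumE -sum1_card [RHS]big_mkcond /=.
by apply: eq_bigr => k _; rewrite mnm1E inE; case: eqP.
Qed.

(* Equal monomials have the same multiset of (label, letter) pairs. *)
Lemma label_mono_inj i i' : label_mono lab i = label_mono lab i' ->
  exists2 p, p \in label_group n lab & i = midx_perm i' p.
Proof.
move=> mono_ii'.
pose w (j : midx n d) (k : 'I_n) := ((inord (lab k) : 'I_Mb.+1), j k).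
have count_w j z : count_mem z [tuple w j k | k < n] = label_mono lab j (enum_rank z).
  rewrite /= count_map label_mono_count cardE size_filter enumT.
  by apply: eq_count => k; rewrite !inE /label_var (inj_eq enum_rank_inj).
have : perm_eq [tuple w i k | k < n] [tuple w i' k | k < n].
  by apply/allP => z _; rewrite inE !count_w mono_ii'.
case/tuple_permP => p w_p.
have w_ip k : w i k = w i' (p k).
  have w_p' : [tuple w i k | k < n] = [tuple tnth [tuple w i' k | k < n] (p k) | k < n].
    exact: val_inj w_p.
  by have := congr1 (fun t => tnth t k) w_p'; rewrite !tnth_mktuple.
exists p; last by apply/ffunP => k; rewrite ffunE; case: (w_ip k).
apply/label_groupP => k; case: (w_ip k) => /(congr1 val) /= + _.
by rewrite !inordK ?ltnS ?lab_le.
Qed.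

Lemma label_poly_neq0 x i0 :
  (forall p i, p \in label_group n lab -> x (midx_perm i p) = x i) ->
  x i0 != 0 -> label_poly lab x != 0.
Proof.
move=> x_sym x_i0; apply/negP => /eqP /(congr1 (mcoeff (label_mono lab i0))).
rewrite /label_poly raddf_sum mcoeff0 /=; under eq_bigr do rewrite mcoeffZ mcoeffX.
rewrite (bigID (fun i => label_mono lab i == label_mono lab i0)) /=.
rewrite [X in _ + X]big1 ?addr0 => [|i /negbTE ->]; last by rewrite mulr0.
rewrite (eq_bigr (fun _ => x i0)) => [|i /eqP /label_mono_inj [p pG ->]]; last first.
  by rewrite x_sym // label_mono_perm // eqxx mulr1.
rewrite sumr_const => /eqP; rewrite mulrn_eq0 (negbTE x_i0) orbF.
by move/eqP/card0_eq/(_ i0); rewrite unfold_in /= eqseqE eqxx.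
Qed.

Lemma label_poly_symmetrize_neq0 x :
  (exists i, symmetrize (label_group n lab) false x i != 0) -> label_poly lab x != 0.
Proof.
case=> i0 Sx_i0.
have Sx_sym p i : p \in label_group n lab ->
    symmetrize (label_group n lab) false x (midx_perm i p) =
    symmetrize (label_group n lab) false x i.
  by move=> pG; rewrite symmetrize_perm // mul1r.
have := label_poly_neq0 Sx_sym Sx_i0.
by rewrite label_poly_symmetrize scaler_eq0 negb_or => /andP [].
Qed.

Lemma label_poly_neq0_witness x : label_poly lab x != 0 -> exists i, x i != 0.
Proof.
move=> Px; apply/existsP; apply: contraNT Px => /existsPn x0.
by apply/eqP; apply: big1 => i _; rewrite (eqP (negbNE (x0 i))) scale0r.
Qed.

End LabelPolynomial.

Definition midx_comp d m n (i : midx n d) (f : 'I_m -> 'I_n) : midx m d :=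
  [ffun k => i (f k)].

Lemma tperm_map_inj (T T' : finType) (f : T -> T') (a b k : T) : injective f ->
  tperm (f a) (f b) (f k) = f (tperm a b k).
Proof.
move=> f_inj; case: (tpermP a b k) => [->|->|ka kb]; rewrite ?tpermL ?tpermR //.
by rewrite tpermD // (inj_eq f_inj) eq_sym; apply/eqP.
Qed.

(* The factors ['I_n] of a tensor power are split into two blocks, the images of
   [f1] and [f2]; [tensor_join x1 x2] is the tensor product [x1 (x) x2]. *)
Section TensorJoin.
Local Open Scope ring_scope.
Variables (K : numClosedFieldType) (n1 n2 n d : nat).
Variables (f1 : 'I_n1 -> 'I_n) (f2 : 'I_n2 -> 'I_n).

Definition merge_idx (u : 'I_n1 + 'I_n2) : 'I_n :=
  match u with inl a => f1 a | inr b => f2 b end.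

Variable g : 'I_n -> 'I_n1 + 'I_n2.
Hypotheses (merge_idxK : cancel merge_idx g) (merge_idxKV : cancel g merge_idx).

Let merge_idx_inj : injective merge_idx := can_inj merge_idxK.

Let f1_inj : injective f1.
Proof. by move=> a b /(@merge_idx_inj (inl a) (inl b)) []. Qed.

Let f2_inj : injective f2.
Proof. by move=> a b /(@merge_idx_inj (inr a) (inr b)) []. Qed.

Let f1_neq_f2 a b : f1 a != f2 b.
Proof. by apply/eqP => /(@merge_idx_inj (inl a) (inr b)). Qed.

Definition midx_merge (i1 : midx n1 d) (i2 : midx n2 d) : midx n d :=
  [ffun k => match g k with inl a => i1 a | inr b => i2 b end].

Lemma midx_merge1 i1 i2 a : midx_merge i1 i2 (f1 a) = i1 a.
Proof. by rewrite ffunE -[f1 a]/(merge_idx (inl a)) merge_idxK. Qed.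

Lemma midx_merge2 i1 i2 b : midx_merge i1 i2 (f2 b) = i2 b.
Proof. by rewrite ffunE -[f2 b]/(merge_idx (inr b)) merge_idxK. Qed.

Lemma midx_comp_merge1 i1 i2 : midx_comp (midx_merge i1 i2) f1 = i1.
Proof. by apply/ffunP => a; rewrite ffunE midx_merge1. Qed.

Lemma midx_comp_merge2 i1 i2 : midx_comp (midx_merge i1 i2) f2 = i2.
Proof. by apply/ffunP => b; rewrite ffunE midx_merge2. Qed.

Lemma midx_merge_comp i : midx_merge (midx_comp i f1) (midx_comp i f2) = i.
Proof.
apply/ffunP => k; rewrite !ffunE -{2}(merge_idxKV k).
by case: (g k) => u; rewrite ffunE.
Qed.

Lemma big_midx_merge (R : Type) (idx : R) (op : Monoid.com_law idx)
    (F : midx n d -> R) :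
  \big[op/idx]_(i : midx n d) F i =
  \big[op/idx]_(i1 : midx n1 d) \big[op/idx]_(i2 : midx n2 d) F (midx_merge i1 i2).
Proof.
rewrite pair_big (reindex (fun p : midx n1 d * midx n2 d => midx_merge p.1 p.2)) //.
exists (fun i => (midx_comp i f1, midx_comp i f2)) => [[i1 i2] _ | i _] /=.
  by rewrite midx_comp_merge1 midx_comp_merge2.
exact: midx_merge_comp.
Qed.

Lemma big_ord_merge (R : Type) (idx : R) (op : Monoid.com_law idx) (F : 'I_n -> R) :
  \big[op/idx]_(k < n) F k =
  op (\big[op/idx]_(a < n1) F (f1 a)) (\big[op/idx]_(b < n2) F (f2 b)).
Proof.
rewrite (reindex merge_idx) ?big_sumType //.
by exists g => u _; rewrite ?merge_idxK ?merge_idxKV.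
Qed.

Definition tensor_join (x1 : midx n1 d -> K) (x2 : midx n2 d -> K) : midx n d -> K :=
  fun i => x1 (midx_comp i f1) * x2 (midx_comp i f2).

Lemma tens_act_join (M : 'M[K]_d) x1 x2 :
  tens_act M x1 =1 x1 -> tens_act M x2 =1 x2 ->
  tens_act M (tensor_join x1 x2) =1 tensor_join x1 x2.
Proof.
move=> Mx1 Mx2 i; rewrite /tensor_join -Mx1 -Mx2 /tens_act.
rewrite (big_midx_merge (Monoid.ComLaw.clone _ _ +%R _)) /= mulr_suml.
apply: eq_bigr => i1 _; rewrite mulr_sumr; apply: eq_bigr => i2 _.
rewrite (big_ord_merge (Monoid.ComLaw.clone _ _ *%R _)) /=.
rewrite midx_comp_merge1 midx_comp_merge2 mulrACA; congr (_ * _ * (_ * _)).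
  by apply: eq_bigr => a _; rewrite midx_merge1 ffunE.
by apply: eq_bigr => b _; rewrite midx_merge2 ffunE.
Qed.

Lemma tensor_join_tperm1 x1 x2 (a b : 'I_n1) i :
  (forall j, x1 (midx_perm j (tperm a b)) = - x1 j) ->
  tensor_join x1 x2 (midx_perm i (tperm (f1 a) (f1 b))) = - tensor_join x1 x2 i.
Proof.
move=> x1_ab; rewrite /tensor_join -mulNr -x1_ab; congr (x1 _ * x2 _).
  by apply/ffunP => k; rewrite !ffunE tperm_map_inj.
by apply/ffunP => k; rewrite !ffunE tpermD // f1_neq_f2.
Qed.

Lemma tensor_join_tperm2 x1 x2 (a b : 'I_n2) i :
  (forall j, x2 (midx_perm j (tperm a b)) = - x2 j) ->
  tensor_join x1 x2 (midx_perm i (tperm (f2 a) (f2 b))) = - tensor_join x1 x2 i.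
Proof.
move=> x2_ab; rewrite /tensor_join -mulrN -x2_ab; congr (x1 _ * x2 _).
  by apply/ffunP => k; rewrite !ffunE tpermD // eq_sym f1_neq_f2.
by apply/ffunP => k; rewrite !ffunE tperm_map_inj.
Qed.

Variables (Mb : nat) (lab lab1 lab2 : nat -> nat).
Hypotheses (lab_f1 : forall a, lab (f1 a) = lab1 a) (lab_f2 : forall b, lab (f2 b) = lab2 b).

Lemma label_poly_join x1 x2 :
  label_poly Mb lab (tensor_join x1 x2) = label_poly Mb lab1 x1 * label_poly Mb lab2 x2.
Proof.
rewrite /label_poly (big_midx_merge (Monoid.ComLaw.clone _ _ +%R _)) /= mulr_suml.
apply: eq_bigr => i1 _; rewrite mulr_sumr; apply: eq_bigr => i2 _.
rewrite /tensor_join midx_comp_merge1 midx_comp_merge2 -scalerAl -scalerAr scalerA.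
congr (_ *: _); rewrite -mpolyXD; congr 'X_[_].
rewrite /label_mono (big_ord_merge (Monoid.ComLaw.clone _ _ mnm_add _)) /=.
by congr mnm_add; apply: eq_bigr => k _; rewrite ?lab_f1 ?lab_f2 ?midx_merge1 ?midx_merge2.
Qed.

End TensorJoin.

Section InvariantVectors.
Local Open Scope ring_scope.
Variables (K : numClosedFieldType) (d : nat) (Q : 'M[K]_d -> Prop).

Definition invariant_under n (x : midx n d -> K) := forall M, Q M -> tens_act M x =1 x.

Definition col_antisym lam (s : midx (sumn lam) d -> K) :=
  forall a b : 'I_(sumn lam), a != b -> colof lam a = colof lam b ->
  forall i, s (midx_perm i (tperm a b)) = - s i.

Definition has_invariant lam := exists v : midx (sumn lam) d -> K,
  (exists i, young_sym v i != 0) /\ invariant_under (young_sym v).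

Lemma has_invariant_col_antisym lam : has_invariant lam ->
  exists s : midx (sumn lam) d -> K,
    [/\ exists i, symmetrize (row_group lam) false s i != 0,
         invariant_under s & col_antisym s].
Proof.
move=> [v [[i0 v_i0] v_inv]].
pose B := @symmetrize K _ d (col_group lam) true.
exists (B (young_sym v)); split.
- rewrite young_symE in v_i0; have [i ABABv] := symmetrize_antisym_twice_neq0 v_i0.
  by exists i; rewrite (symmetrize_ext _ _ (symmetrize_ext _ _ (young_symE v))).
- move=> M QM i; rewrite tens_act_symmetrize; apply: symmetrize_ext => {}i.
  exact: v_inv.
- move=> a b ab col_ab i; rewrite /B symmetrize_perm; last exact: tperm_label_group.
  by rewrite /sgnb odd_tperm ab expr1 mulN1r.
Qed.

Lemma col_antisym_has_invariant lam (s : midx (sumn lam) d -> K) :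
  (exists i, symmetrize (row_group lam) false s i != 0) -> invariant_under s ->
  col_antisym s -> has_invariant lam.
Proof.
move=> [i0 As_i0] s_inv s_anti; exists s.
have young_s : young_sym s =1 (fun i =>
    #|col_group lam|%:R * symmetrize (row_group lam) false s i).
  move=> i; rewrite young_symE (symmetrize_ext _ _ (symmetrize_label_antisym s_anti)).
  by rewrite /symmetrize mulr_sumr; apply: eq_bigr => p _; rewrite mulrCA.
split.
  exists i0; rewrite young_s mulf_neq0 // pnatr_eq0 -lt0n.
  exact: (cardG_gt0 (col_group_group lam)).
move=> M QM i; rewrite (tens_act_ext M (young_symE s)) young_symE.
rewrite tens_act_symmetrize; apply: symmetrize_ext => {}i.
rewrite tens_act_symmetrize; apply: symmetrize_ext => {}i.
exact: s_inv.
Qed.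

(* [lt] is glued row by row from the columns of [la] and [mu]: column [c] of
   [la] (resp. [mu]) becomes column [F1 c] (resp. [F2 c]) of [lt]. *)
Section Merge.
Variables (la mu lt : seq nat) (F1 F2 : nat -> nat).
Hypotheses (size_la : size la = size lt) (size_mu : size mu = size lt).
Hypothesis F1_box : forall r c, (r < size la -> c < nth 0 la r -> F1 c < nth 0 lt r)%N.
Hypothesis F2_box : forall r c, (r < size mu -> c < nth 0 mu r -> F2 c < nth 0 lt r)%N.
Hypotheses (F1_inj : injective F1) (F2_inj : injective F2).
Hypothesis F1_neq_F2 : forall r c c', (r < size la -> c < nth 0 la r -> F1 c != F2 c')%N.
Hypothesis sumn_lt : (sumn la + sumn mu = sumn lt)%N.

Local Notation e1 := (box_emb size_la F1_box).
Local Notation e2 := (box_emb size_mu F2_box).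

Lemma merge_col_neq a b : colof lt (e1 a) != colof lt (e2 b).
Proof.
have [r_la c_r _] := box_decomp (ltn_ord a).
by rewrite !box_emb_col (F1_neq_F2 _ r_la c_r).
Qed.

Lemma merge_box_bij : bijective (merge_idx e1 e2).
Proof.
apply: inj_card_bij => [[a|b] [a'|b'] /= e|]; last by rewrite card_sum !card_ord sumn_lt.
- by rewrite (box_emb_inj F1_inj e).
- by move: (merge_col_neq a b'); rewrite e eqxx.
- by move: (merge_col_neq a' b); rewrite e eqxx.
- by rewrite (box_emb_inj F2_inj e).
Qed.

Section MergeJoin.
Variable g : 'I_(sumn lt) -> 'I_(sumn la) + 'I_(sumn mu).
Hypotheses (gK : cancel (merge_idx e1 e2) g) (gKV : cancel g (merge_idx e1 e2)).
Variables (s1 : midx (sumn la) d -> K) (s2 : midx (sumn mu) d -> K).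

Lemma col_antisym_join :
  col_antisym s1 -> col_antisym s2 -> col_antisym (tensor_join e1 e2 s1 s2).
Proof.
move=> s1_anti s2_anti a b ab col_ab i.
rewrite -(gKV a) -(gKV b) in ab col_ab *.
case: (g a) ab col_ab => a'; case: (g b) => b' ab col_ab.
- apply: (tensor_join_tperm1 gK); apply: s1_anti; first by apply: contraNneq ab => ->.
  by apply: F1_inj; rewrite -!(box_emb_col size_la F1_box).
- by move: (merge_col_neq a' b'); rewrite col_ab eqxx.
- by move: (merge_col_neq b' a'); rewrite col_ab eqxx.
- apply: (tensor_join_tperm2 gK); apply: s2_anti; first by apply: contraNneq ab => ->.
  by apply: F2_inj; rewrite -!(box_emb_col size_mu F2_box).
Qed.

Lemma row_symmetrize_join_neq0 :
  (exists i, symmetrize (row_group la) false s1 i != 0) ->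
  (exists i, symmetrize (row_group mu) false s2 i != 0) ->
  exists i, symmetrize (row_group lt) false (tensor_join e1 e2 s1 s2) i != 0.
Proof.
move=> As1 As2.
have row_le lam : size lam = size lt -> forall k, (rowof lam k <= size lt)%N.
  by move=> <- k; apply: rowof_le.
apply: (@label_poly_neq0_witness K d (size lt) _ (rowof lt)).
rewrite label_poly_symmetrize.
rewrite (label_poly_join gK gKV _ (box_emb_row size_la F1_box) (box_emb_row size_mu F2_box)).
rewrite scaler_eq0 mulf_eq0 !negb_or pnatr_eq0 -lt0n cardG_gt0 /=.
by rewrite (label_poly_symmetrize_neq0 (row_le _ size_la) As1)
  (label_poly_symmetrize_neq0 (row_le _ size_mu) As2).
Qed.

End MergeJoin.

Lemma has_invariant_merge : has_invariant la -> has_invariant mu -> has_invariant lt.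
Proof.
move=> /has_invariant_col_antisym [s1 [As1 s1_inv s1_anti]].
move=> /has_invariant_col_antisym [s2 [As2 s2_inv s2_anti]].
have [g gK gKV] := merge_box_bij.
apply: (col_antisym_has_invariant (s := tensor_join e1 e2 s1 s2)).
- exact: (row_symmetrize_join_neq0 gK gKV As1 As2).
- by move=> M QM; apply: (tens_act_join gK gKV); [apply: s1_inv | apply: s2_inv].
- exact: (col_antisym_join gK gKV s1_anti s2_anti).
Qed.

End Merge.
End InvariantVectors.

Section DiagD.
Variable d : nat.

Lemma size_diagD j : size (diagD d j) = (d - 2).+1.
Proof. by rewrite /= size_nseq. Qed.

Lemma nth_diagD j r : r < (d - 2).+1 ->
  nth 0 (diagD d j) r = if r == 0 then 2 * j else j.
Proof. by case: r => [|r] //=; rewrite ltnS => r_d; rewrite nth_nseq r_d. Qed.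

Lemma sumn_diagD j : sumn (diagD d j) = 2 * j + j * (d - 2).
Proof. by rewrite /= sumn_nseq. Qed.

(* [(2j+4, (j+2)^(d-2))] is [(2j, j^(d-2))] with the two columns of [(4, 2^(d-2))]
   inserted after column [j - 1]; the last two columns of the first row of
   [(4, 2^(d-2))] become the last two of [(2j+4)]. *)
Definition shift_col j c := if c < j then c else c + 2.
Definition insert_col j c := if c < 2 then j + c else 2 * j + c.

Variable K : numClosedFieldType.
Variable Q : 'M[K]_d -> Prop.

Lemma has_invariant_diagD_add2 j : has_invariant Q (diagD d j) ->
  has_invariant Q (diagD d 2) -> has_invariant Q (diagD d j.+2).
Proof.
have size_eq k : size (diagD d k) = size (diagD d j.+2) by rewrite !size_diagD.
apply: (has_invariant_merge (size_eq j) (size_eq 2)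
  (F1 := shift_col j) (F2 := insert_col j)).
- move=> r c; rewrite size_diagD => r_d; rewrite !nth_diagD // /shift_col.
  by case: (r == 0); case: (ltnP c j); lia.
- move=> r c; rewrite size_diagD => r_d; rewrite !nth_diagD // /insert_col.
  by case: (r == 0); case: (ltnP c 2); lia.
- by move=> c c'; rewrite /shift_col; case: (ltnP c j); case: (ltnP c' j); lia.
- by move=> c c'; rewrite /insert_col; case: (ltnP c 2); case: (ltnP c' 2); lia.
- move=> r c c'; rewrite size_diagD => r_d; rewrite nth_diagD // /shift_col /insert_col.
  by case: (r == 0); case: (ltnP c j); case: (ltnP c' 2); lia.
- by rewrite !sumn_diagD; lia.
Qed.

End DiagD.

Definition SU_tensor (R : realType) (dA dB : nat) (M : 'M[R[i]]_(dA * dB)) : Prop :=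
  exists2 UA, UA \in @SU R dA & exists2 UB, UB \in @SU R dB & M = UA *t UB.

Lemma restr_contains_trivialP (R : realType) (dA dB : nat) lam :
  restr_contains_trivial R dA dB lam <-> has_invariant (@SU_tensor R dA dB) lam.
Proof.
split=> [] [v [v_nz v_inv]]; exists v; split=> //.
  by move=> M [UA UA_SU [UB UB_SU ->]]; apply: v_inv.
by move=> UA UB UA_SU UB_SU; apply: v_inv; exists UA => //; exists UB.
Qed.

Theorem mainTheorem7 (R : realType) (dA dB j : nat) :
  (2 <= dA)%N -> (2 <= dB)%N ->
  restr_contains_trivial R dA dB (diagD (dA * dB) j) ->
  restr_contains_trivial R dA dB (diagD (dA * dB) 2) ->
  restr_contains_trivial R dA dB (diagD (dA * dB) j.+2).
Proof.
move=> _ _ /restr_contains_trivialP inv_j /restr_contains_trivialP inv_2.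
by apply/restr_contains_trivialP; apply: has_invariant_diagD_add2.
Qed.
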